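(* Let $\varPhi\subset\mathbb{E}^3$ be a skew ruled surface with invariants $\delta,\kappa,\lambda$, right normalized with support function $q=\frac{f(u)+g(u)v}{w}$, neither $f$ nor $g$ the zero function. Then the Tchebychev vector field $\overline{T}$ is incompressible with respect to the first fundamental form of $\varPhi$ (i.e. $\operatorname{div}^I\overline{T}=0$) if and only if $\varPhi$ is conoidal with constant distribution parameter $\delta=c_2\neq0$, $g$ is a nonvanishing constant $c_1$, and $f=c_1c_2\int\lambda\,\mathrm{d}u+c_3$, $c_3\in\mathbb{R}$.
   Context: $\varPhi$ is a ruled $C^r$-surface ($r\ge3$) with nonvanishing Gaussian curvature, in standard parameters $\overline{x}(u,v)=\overline{s}(u)+v\,\overline{e}(u)$, $|\overline{e}|=|\overline{e}'|=1$, $\langle\overline{s}',\overline{e}'\rangle=0$. Frame $\overline{n}=\overline{e}'$, $\overline{z}=\overline{e}\times\overline{n}$. Invariants: distribution parameter $\delta=(\overline{s}',\overline{e},\overline{e}')\neq0$, $\kappa=(\overline{e},\overline{e}',\overline{e}'')$, $\lambda=\cot\sphericalangle(\overline{e},\overline{s}')$, $\overline{s}'=\delta\lambda\overline{e}+\delta\overline{z}$. Conoidal means $\kappa\equiv0$. $w=\sqrt{\delta^2+v^2}$ (so $w^2$ is the discriminant of the first fundamental form), $\overline{\xi}=(\delta\overline{n}-v\overline{z})/w$. $h_{11}=-(\kappa w^2+\delta'v-\delta^2\lambda)/w$, $h_{12}=\delta/w$, $h_{22}=0$. A relative normalization is determined by its support function $q=\langle\overline{\xi},\overline{y}\rangle\neq0$;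 right normalization: $q=(f+gv)/w$, $f,g$ functions of $u$. Relative metric $G_{ij}=q^{-1}h_{ij}$, Darboux tensor $A_{ijk}=q^{-1}\langle\overline{\xi},\nabla^G_k\nabla^G_j\overline{x}_{/i}\rangle$, Tchebychev vector $\overline{T}=T^m\overline{x}_{/m}$, $T^m=\frac12A_i^{\ im}$; equivalently $T^1=\frac{w^2q_{/2}+vq}{\delta w}$, $T^2=\frac{2\delta w^2q_{/1}+\delta'q(\delta^2-v^2)}{2\delta^2w}+\frac{T^1(\kappa w^2+\delta'v-\delta^2\lambda)}{\delta}$. The divergence with respect to the first fundamental form is $\operatorname{div}^I\overline{T}=\frac{(wT^i)_{/i}}{w}$ (sum over $i$, $_{/1}=\partial_u$, $_{/2}=\partial_v$). $\int\cdots\mathrm{d}u$ denotes an antiderivative. *)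

From Stdlib Require Import Reals.
From Coquelicot Require Import Coquelicot.
Open Scope R_scope.

Definition vec := (R * R * R)%type.
Definition v1 (x : vec) : R := fst (fst x).
Definition v2 (x : vec) : R := snd (fst x).
Definition v3 (x : vec) : R := snd x.
Definition dot (x y : vec) : R := v1 x * v1 y + v2 x * v2 y + v3 x * v3 y.
Definition cross (x y : vec) : vec :=
  ((v2 x * v3 y - v3 x * v2 y, v3 x * v1 y - v1 x * v3 y),
    v1 x * v2 y - v2 x * v1 y).
Definition det3 (x y z : vec) : R := dot x (cross y z).

Definition vD (h : R -> vec) (u : R) : vec :=
  ((Derive (fun t => v1 (h t)) u, Derive (fun t => v2 (h t)) u),
    Derive (fun t => v3 (h t)) u).

Definition inI (a b : Rbar) (u : R) : Prop := Rbar_lt a u /\ Rbar_lt u b.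

Definition C3_on (a b : Rbar) (h : R -> R) : Prop :=
  forall u, inI a b u ->
    (forall k : nat, (k < 3)%nat -> ex_derive (Derive_n h k) u) /\
    continuous (Derive_n h 3) u.

Definition C3_curve_on (a b : Rbar) (h : R -> vec) : Prop :=
  C3_on a b (fun t => v1 (h t)) /\ C3_on a b (fun t => v2 (h t)) /\
  C3_on a b (fun t => v3 (h t)).

(** Standard parameters of x(u,v) = s(u) + v e(u) on u in (a,b):
    |e| = |e'| = 1 and <s', e'> = 0. *)
Definition standard_params (a b : Rbar) (s e : R -> vec) : Prop :=
  forall u, inI a b u ->
    dot (e u) (e u) = 1 /\ dot (vD e u) (vD e u) = 1 /\
    dot (vD s u) (vD e u) = 0.

Definition delta (s e : R -> vec) (u : R) : R := det3 (vD s u) (e u) (vD e u).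
Definition kappa (e : R -> vec) (u : R) : R := det3 (e u) (vD e u) (vD (vD e) u).
(** lambda is defined through s' = delta lambda e + delta z, i.e.
    <s', e> = delta * lambda. *)
Definition lambda (s e : R -> vec) (u : R) : R := dot (vD s u) (e u) / delta s e u.

Definition wf (s e : R -> vec) (u v : R) : R := sqrt (delta s e u ^ 2 + v ^ 2).

Definition qf (s e : R -> vec) (f g : R -> R) (u v : R) : R :=
  (f u + g u * v) / wf s e u v.

Definition q_u (s e : R -> vec) (f g : R -> R) (u v : R) : R :=
  Derive (fun t => qf s e f g t v) u.
Definition q_v (s e : R -> vec) (f g : R -> R) (u v : R) : R :=
  Derive (fun t => qf s e f g u t) v.

Definition T1 (s e : R -> vec) (f g : R -> R) (u v : R) : R :=
  let w := wf s e u v in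
  (w ^ 2 * q_v s e f g u v + v * qf s e f g u v) / (delta s e u * w).

Definition T2 (s e : R -> vec) (f g : R -> R) (u v : R) : R :=
  let w := wf s e u v in
  let d := delta s e u in
  let d' := Derive (delta s e) u in
  (2 * d * w ^ 2 * q_u s e f g u v + d' * qf s e f g u v * (d ^ 2 - v ^ 2))
    / (2 * d ^ 2 * w)
  + T1 s e f g u v * (kappa e u * w ^ 2 + d' * v - d ^ 2 * lambda s e u) / d.

Definition divI_T (s e : R -> vec) (f g : R -> R) (u v : R) : R :=
  (Derive (fun t => wf s e t v * T1 s e f g t v) u
   + Derive (fun t => wf s e u t * T2 s e f g u t) v) / wf s e u v.

(* Since q = (f + g v)/w, the Tchebychev component T^1 = g/delta does not depend on v
   and T^2 is a quadratic polynomial in v; hence (delta^2 + v^2) div^I T is a cubic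
   polynomial in v.  It vanishes on an interval of v iff its four coefficients do, that is
   iff g' = 0, g delta' = g kappa = 0 and 2 delta f' - delta' f = 2 delta^2 g lambda.
   Since g is not identically zero it is then a nonzero constant c1, which forces
   kappa = 0, delta = c2 constant and f' = c1 c2 lambda. *)

From Stdlib Require Import Reals Lra Lia.
From Coquelicot Require Import Coquelicot.
Open Scope R_scope.

Lemma inI_locally a b u : inI a b u -> locally u (inI a b).
Proof. exact (open_and _ _ (open_Rbar_gt a) (open_Rbar_lt b) u). Qed.

Lemma inI_between a b x y z : inI a b x -> inI a b y -> x <= z <= y -> inI a b z.
Proof. destruct a, b; unfold inI; simpl; intuition lra. Qed.

Lemma inI_two_points a b : Rbar_lt a b -> exists x y, x < y /\ inI a b x /\ inI a b y.
Proof.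
  destruct a as [a| |], b as [b| |]; simpl; intro Hab; try contradiction;
    unfold inI; simpl.
  - exists (a + (b - a) / 3), (a + 2 * (b - a) / 3); lra.
  - exists (a + 1), (a + 2); lra.
  - exists (b - 2), (b - 1); lra.
  - exists 0, 1; repeat split; lra.
Qed.

Lemma Derive_const_on a b (h : R -> R) c u :
  (forall t, inI a b t -> h t = c) -> inI a b u -> Derive h u = 0.
Proof.
  intros Hc Hu. rewrite (Derive_ext_loc _ (fun _ => c)); [apply Derive_const |].
  apply (filter_imp (inI a b)); [exact Hc | exact (inI_locally a b u Hu)].
Qed.

Lemma is_derive_0_const_on a b (h : R -> R) :
  (forall u, inI a b u -> is_derive h u 0) ->
  forall x y, inI a b x -> inI a b y -> h x = h y.
Proof.
  intros Hd.
  assert (Hle : forall x y, inI a b x -> inI a b y -> x < y -> h x = h y).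
  { intros x y Hx Hy Hxy.
    destruct (MVT_cor3 h (fun _ => 0) x y Hxy) as (z & _ & _ & ->); [| ring].
    intros z Hxz Hzy. apply is_derive_Reals, Hd, (inI_between a b x y); auto. }
  intros x y Hx Hy. destruct (Rtotal_order x y) as [Hxy | [-> | Hxy]]; auto.
  symmetry; auto.
Qed.

Definition cubic (p0 p1 p2 p3 v : R) : R := p0 + p1 * v + p2 * v ^ 2 + p3 * v ^ 3.

Lemma cubic_eq0_equidistant p0 p1 p2 p3 x h : h <> 0 ->
  cubic p0 p1 p2 p3 x = 0 -> cubic p0 p1 p2 p3 (x + h) = 0 ->
  cubic p0 p1 p2 p3 (x + 2 * h) = 0 -> cubic p0 p1 p2 p3 (x + 3 * h) = 0 ->
  p0 = 0 /\ p1 = 0 /\ p2 = 0 /\ p3 = 0.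
Proof.
  intros Hh P0 P1 P2 P3.
  assert (Hp3 : p3 = 0).
  { assert (E : 6 * h ^ 3 * p3 = 0).
    { transitivity (cubic p0 p1 p2 p3 (x + 3 * h) - 3 * cubic p0 p1 p2 p3 (x + 2 * h)
                      + 3 * cubic p0 p1 p2 p3 (x + h) - cubic p0 p1 p2 p3 x);
        [unfold cubic; ring | rewrite P0, P1, P2, P3; ring]. }
    destruct (Rmult_integral _ _ E) as [E' | ]; auto.
    exfalso; apply (pow_nonzero h 3) in Hh; lra. }
  subst p3.
  assert (Hp2 : p2 = 0).
  { assert (E : 2 * h ^ 2 * p2 = 0).
    { transitivity (cubic p0 p1 p2 0 (x + 2 * h) - 2 * cubic p0 p1 p2 0 (x + h)
                      + cubic p0 p1 p2 0 x);
        [unfold cubic; ring | rewrite P0, P1, P2; ring]. }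
    destruct (Rmult_integral _ _ E) as [E' | ]; auto.
    exfalso; apply (pow_nonzero h 2) in Hh; lra. }
  subst p2.
  assert (Hp1 : p1 = 0).
  { assert (E : h * p1 = 0).
    { transitivity (cubic p0 p1 0 0 (x + h) - cubic p0 p1 0 0 x);
        [unfold cubic; ring | rewrite P0, P1; ring]. }
    destruct (Rmult_integral _ _ E); [contradiction | assumption]. }
  subst p1. unfold cubic in P0. repeat split; lra.
Qed.

Lemma cubic_eq0_on a b p0 p1 p2 p3 : Rbar_lt a b ->
  (forall v, inI a b v -> cubic p0 p1 p2 p3 v = 0) ->
  p0 = 0 /\ p1 = 0 /\ p2 = 0 /\ p3 = 0.
Proof.
  intros Hab HP. destruct (inI_two_points a b Hab) as (x & y & Hxy & Hx & Hy).
  assert (Hseg : forall z, x <= z <= y -> cubic p0 p1 p2 p3 z = 0).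
  { intros z Hz. apply HP, (inI_between a b x y); auto. }
  apply (cubic_eq0_equidistant p0 p1 p2 p3 x ((y - x) / 3)); [lra | ..];
    apply Hseg; lra.
Qed.

Definition vec_ex_derive (h : R -> vec) (u : R) : Prop :=
  ex_derive (fun t => v1 (h t)) u /\ ex_derive (fun t => v2 (h t)) u /\
  ex_derive (fun t => v3 (h t)) u.

Lemma ex_derive_dot x y u : vec_ex_derive x u -> vec_ex_derive y u ->
  ex_derive (fun t => dot (x t) (y t)) u.
Proof.
  intros (x1 & x2 & x3) (y1 & y2 & y3); unfold dot.
  apply (ex_derive_plus (V := R_NormedModule) (fun t => _ + _));
    [apply (ex_derive_plus (V := R_NormedModule) (fun t => _ * _)) |];
    apply ex_derive_mult; assumption.
Qed.

Lemma vec_ex_derive_cross x y u : vec_ex_derive x u -> vec_ex_derive y u ->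
  vec_ex_derive (fun t => cross (x t) (y t)) u.
Proof.
  intros (x1 & x2 & x3) (y1 & y2 & y3); unfold vec_ex_derive, cross; simpl.
  repeat split; apply (ex_derive_minus (V := R_NormedModule) (fun t => _ * _));
    apply ex_derive_mult; assumption.
Qed.

Lemma C3_curve_vec_ex_derive a b h u : C3_curve_on a b h -> inI a b u ->
  vec_ex_derive h u /\ vec_ex_derive (vD h) u.
Proof.
  intros (h1 & h2 & h3) Hu.
  destruct (h1 u Hu) as [d1 _], (h2 u Hu) as [d2 _], (h3 u Hu) as [d3 _].
  split; repeat split;
    [apply (d1 0%nat) | apply (d2 0%nat) | apply (d3 0%nat)
    | apply (d1 1%nat) | apply (d2 1%nat) | apply (d3 1%nat)]; lia.
Qed.

Lemma ex_derive_delta a b s e u : C3_curve_on a b s -> C3_curve_on a b e -> inI a b u ->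
  ex_derive (delta s e) u.
Proof.
  intros Hs He Hu.
  destruct (C3_curve_vec_ex_derive a b s u Hs Hu) as [_ Ds],
    (C3_curve_vec_ex_derive a b e u He Hu) as [De DDe].
  apply ex_derive_dot; [| apply vec_ex_derive_cross]; assumption.
Qed.

Lemma sum_sq_pos D v : D <> 0 -> 0 < D ^ 2 + v ^ 2.
Proof. intros HD. assert (0 < D ^ 2) by (apply pow2_gt_0; assumption). nra. Qed.

(* The vanishing of the coefficients of the cubic [divI_T_cubic], in reduced form. *)
Definition incompressibility_conditions (D f g K L : R -> R) (u : R) : Prop :=
  Derive g u = 0 /\ g u * Derive D u = 0 /\ g u * K u = 0 /\
  2 * D u * Derive f u - Derive D u * f u = 2 * D u ^ 2 * g u * L u.

Section Tchebychev.

Variables (s e : R -> vec) (f g : R -> R).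

Lemma T1_eq u v : delta s e u <> 0 -> T1 s e f g u v = g u / delta s e u.
Proof.
  intros HD. unfold T1, q_v, qf, wf. set (D := delta s e u).
  assert (Hpos := sum_sq_pos D v HD).
  assert (Hw : sqrt (D ^ 2 + v ^ 2) <> 0) by (apply Rgt_not_eq, sqrt_lt_R0; assumption).
  rewrite (is_derive_unique _ _
    ((g u * sqrt (D ^ 2 + v ^ 2) ^ 2 - (f u + g u * v) * v) / sqrt (D ^ 2 + v ^ 2) ^ 3)).
  2:{ auto_derive; change (D * (D * 1) + v * (v * 1)) with (D ^ 2 + v ^ 2);
        [tauto | field; assumption]. }
  field; split; assumption.
Qed.

Variable u : R.
Hypothesis delta_neq0 : delta s e u <> 0.
Hypotheses (delta_derivable : ex_derive (delta s e) u)
  (f_derivable : ex_derive f u) (g_derivable : ex_derive g u).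

Local Notation D := (delta s e u).
Local Notation D' := (Derive (delta s e) u).
Local Notation f' := (Derive f u).
Local Notation g' := (Derive g u).
Local Notation K := (kappa e u).
Local Notation L := (lambda s e u).

Lemma T2_eq v : T2 s e f g u v =
  (f' / D - D' * f u / (2 * D ^ 2) + g u * K - g u * L)
  + (g' / D + g u * D' / (2 * D ^ 2)) * v + g u * K / D ^ 2 * v ^ 2.
Proof.
  unfold T2; cbv zeta; rewrite T1_eq by assumption. unfold q_u, qf, wf.
  assert (Hpos := sum_sq_pos D v delta_neq0).
  assert (Hw : sqrt (D ^ 2 + v ^ 2) <> 0) by (apply Rgt_not_eq, sqrt_lt_R0; assumption).
  assert (Hw2 : sqrt (D ^ 2 + v ^ 2) ^ 2 = D ^ 2 + v ^ 2) by (apply pow2_sqrt; lra).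
  rewrite (is_derive_unique _ _
    (((f' + g' * v) * sqrt (D ^ 2 + v ^ 2) ^ 2 - (f u + g u * v) * D * D')
     / sqrt (D ^ 2 + v ^ 2) ^ 3)).
  2:{ auto_derive; change (D * (D * 1) + v * (v * 1)) with (D ^ 2 + v ^ 2);
        change (fun x => f x) with f; change (fun x => g x) with g;
        change (fun x => delta s e x) with (delta s e); [tauto | field; assumption]. }
  (* After these two uses of w^2 = D^2 + v^2 the identity holds for w an independent
     variable, so [field] can close it. *)
  replace (D ^ 2 - v ^ 2) with (2 * D ^ 2 - sqrt (D ^ 2 + v ^ 2) ^ 2) by lra.
  replace (K * sqrt (D ^ 2 + v ^ 2) ^ 2) with (K * (D ^ 2 + v ^ 2)) by (rewrite Hw2; ring).
  field; split; assumption.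
Qed.

Hypothesis delta_near_neq0 : locally u (fun t => delta s e t <> 0).

Lemma divI_T_cubic v : (D ^ 2 + v ^ 2) * divI_T s e f g u v =
  cubic (2 * D * g' + g u * D' / 2) (f' / D - D' * f u / (2 * D ^ 2) + 3 * (g u * K) - g u * L)
    (3 * g' / D) (3 * (g u * K) / D ^ 2) v.
Proof.
  assert (Hpos := sum_sq_pos D v delta_neq0).
  assert (Hw : sqrt (D ^ 2 + v ^ 2) <> 0) by (apply Rgt_not_eq, sqrt_lt_R0; assumption).
  assert (Hw2 : sqrt (D ^ 2 + v ^ 2) ^ 2 = D ^ 2 + v ^ 2) by (apply pow2_sqrt; lra).
  set (P0 := f' / D - D' * f u / (2 * D ^ 2) + g u * K - g u * L).
  set (P1 := g' / D + g u * D' / (2 * D ^ 2)).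
  set (P2 := g u * K / D ^ 2).
  assert (Hu : Derive (fun t => wf s e t v * T1 s e f g t v) u =
    D * D' / sqrt (D ^ 2 + v ^ 2) * (g u / D)
    + sqrt (D ^ 2 + v ^ 2) * (g' / D - g u * D' / D ^ 2)).
  { rewrite (Derive_ext_loc _ (fun t => sqrt (delta s e t ^ 2 + v ^ 2) * (g t / delta s e t))).
    2:{ apply (filter_imp (fun t => delta s e t <> 0)); [| exact delta_near_neq0].
        intros t Ht. unfold wf. rewrite T1_eq by exact Ht. reflexivity. }
    apply is_derive_unique.
    auto_derive; change (D * (D * 1) + v * (v * 1)) with (D ^ 2 + v ^ 2);
      change (fun x => g x) with g; change (fun x => delta s e x) with (delta s e);
      [tauto | field; split; assumption]. }
  assert (Hv : Derive (fun t => wf s e u t * T2 s e f g u t) v =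
    v / sqrt (D ^ 2 + v ^ 2) * (P0 + P1 * v + P2 * v ^ 2)
    + sqrt (D ^ 2 + v ^ 2) * (P1 + 2 * P2 * v)).
  { rewrite (Derive_ext _ (fun t => sqrt (D ^ 2 + t ^ 2) * (P0 + P1 * t + P2 * t ^ 2)))
      by (intros t; unfold wf; rewrite T2_eq; reflexivity).
    apply is_derive_unique.
    auto_derive; change (D * (D * 1) + v * (v * 1)) with (D ^ 2 + v ^ 2);
      [tauto | field; assumption]. }
  assert (Hdiv : divI_T s e f g u v =
    (D' * g u + v * (P0 + P1 * v + P2 * v ^ 2)) / (D ^ 2 + v ^ 2)
    + (g' / D - g u * D' / D ^ 2 + P1 + 2 * P2 * v)).
  { unfold divI_T; rewrite Hu, Hv. unfold wf.
    set (w := sqrt (D ^ 2 + v ^ 2)) in *. rewrite <- Hw2. field; split; assumption. }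
  rewrite Hdiv. unfold cubic, P0, P1, P2. field; split; lra.
Qed.

Lemma divI_T_eq0_on_iff c d : Rbar_lt c d ->
  (forall v, inI c d v -> divI_T s e f g u v = 0) <->
  incompressibility_conditions (delta s e) f g (kappa e) (lambda s e) u.
Proof.
  intros Hcd; unfold incompressibility_conditions; split.
  - intros Hdiv.
    edestruct (cubic_eq0_on c d) as (C0 & C1 & C2 & C3); [exact Hcd | |].
    { intros v Hv. eapply eq_trans; [symmetry; apply divI_T_cubic |].
      rewrite (Hdiv v Hv). ring. }
    assert (Hg' : g' = 0).
    { replace g' with (D / 3 * (3 * g' / D)) by (field; assumption). rewrite C2; ring. }
    assert (HgK : g u * K = 0).
    { replace (g u * K) with (D ^ 2 / 3 * (3 * (g u * K) / D ^ 2))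
        by (field; assumption). rewrite C3; ring. }
    rewrite Hg' in C0; rewrite HgK in C1.
    repeat split; [assumption | lra | assumption |].
    assert (E : 2 * D * f' - D' * f u - 2 * D ^ 2 * g u * L =
      2 * D ^ 2 * (f' / D - D' * f u / (2 * D ^ 2) + 3 * 0 - g u * L))
      by (field; assumption).
    rewrite C1 in E; lra.
  - intros (Hg' & HgD' & HgK & Hf') v Hv.
    apply (Rmult_eq_reg_l (D ^ 2 + v ^ 2)); [| apply Rgt_not_eq, sum_sq_pos; assumption].
    rewrite divI_T_cubic, Rmult_0_r. unfold cubic. rewrite Hg', HgK, HgD'.
    replace (f' / D - D' * f u / (2 * D ^ 2) + 3 * 0 - g u * L)
      with ((2 * D * f' - D' * f u - 2 * D ^ 2 * g u * L) / (2 * D ^ 2))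
      by (field; assumption).
    rewrite Hf'. field; assumption.
Qed.

End Tchebychev.

Lemma const_of_incompressibility_conditions a b (D f g K L : R -> R) :
  Rbar_lt a b ->
  (forall u, inI a b u -> D u <> 0) ->
  (forall u, inI a b u -> ex_derive D u) ->
  (forall u, inI a b u -> ex_derive f u /\ ex_derive g u) ->
  ~ (forall u, inI a b u -> g u = 0) ->
  (forall u, inI a b u -> incompressibility_conditions D f g K L u) ->
  (forall u, inI a b u -> K u = 0) /\
  exists c2 : R, c2 <> 0 /\ (forall u, inI a b u -> D u = c2) /\
  exists c1 : R, c1 <> 0 /\ (forall u, inI a b u -> g u = c1) /\
  exists (Lam : R -> R) (c3 : R),
    (forall u, inI a b u -> is_derive Lam u (L u)) /\
    (forall u, inI a b u -> f u = c1 * c2 * Lam u + c3).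
Proof.
  intros Hab HD HdD Hfg Hg0 Hinc.
  destruct (inI_two_points a b Hab) as (u0 & _ & _ & Hu0 & _).
  assert (Hconst : forall h : R -> R,
    (forall u, inI a b u -> ex_derive h u /\ Derive h u = 0) ->
    forall u, inI a b u -> h u = h u0).
  { intros h Hh u Hu. apply (is_derive_0_const_on a b); auto.
    intros t Ht. destruct (Hh t Ht) as [Hex <-]. apply Derive_correct, Hex. }
  assert (Hgc : forall u, inI a b u -> g u = g u0).
  { apply Hconst. intros u Hu. split; [apply Hfg | apply Hinc]; exact Hu. }
  set (c1 := g u0).
  assert (Hc1 : c1 <> 0).
  { intros E. apply Hg0. intros u Hu. rewrite Hgc by exact Hu. exact E. }
  assert (Hcancel : forall u y, inI a b u -> g u * y = 0 -> y = 0).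
  { intros u y Hu E. rewrite Hgc in E by exact Hu.
    destruct (Rmult_integral _ _ E); [contradiction | assumption]. }
  assert (HD' : forall u, inI a b u -> Derive D u = 0).
  { intros u Hu. apply (Hcancel u); [exact Hu | apply Hinc, Hu]. }
  assert (HDc : forall u, inI a b u -> D u = D u0).
  { apply Hconst. intros u Hu. split; [apply HdD | apply HD']; exact Hu. }
  set (c2 := D u0).
  assert (Hc2 : c2 <> 0) by (apply HD, Hu0).
  split; [intros u Hu; apply (Hcancel u); [exact Hu | apply Hinc, Hu] |].
  exists c2; split; [exact Hc2 | split; [exact HDc |]].
  exists c1; split; [exact Hc1 | split; [exact Hgc |]].
  exists (fun t => f t / (c1 * c2)), 0; split; [| intros u Hu; field; split; assumption].
  intros u Hu. destruct (Hinc u Hu) as (_ & _ & _ & Hf').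
  rewrite (HD' u Hu), (HDc u Hu), (Hgc u Hu) in Hf'; fold c1 c2 in Hf'.
  assert (Hf'' : Derive f u = c1 * c2 * L u).
  { apply (Rmult_eq_reg_l (2 * c2)); [lra |].
    apply Rmult_integral_contrapositive; split; lra. }
  auto_derive; [apply Hfg, Hu |]. change (fun x => f x) with f.
  rewrite Hf''. field. split; assumption.
Qed.

Lemma incompressibility_conditions_of_const a b (D f g K L Lam : R -> R) c1 c2 c3 :
  (forall u, inI a b u -> K u = 0) ->
  (forall u, inI a b u -> D u = c2) ->
  (forall u, inI a b u -> g u = c1) ->
  (forall u, inI a b u -> is_derive Lam u (L u)) ->
  (forall u, inI a b u -> f u = c1 * c2 * Lam u + c3) ->
  forall u, inI a b u -> incompressibility_conditions D f g K L u.
Proof.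
  intros HK HD Hg HL Hf u Hu.
  assert (Hf' : Derive f u = c1 * c2 * L u).
  { apply is_derive_unique, (is_derive_ext_loc (fun t => c1 * c2 * Lam t + c3)).
    { apply (filter_imp (inI a b)); [| apply inI_locally, Hu].
      intros t Ht; symmetry; apply Hf, Ht. }
    auto_derive; [eexists; apply HL, Hu |]. change (fun x => Lam x) with Lam.
    rewrite (is_derive_unique _ _ _ (HL u Hu)). ring. }
  unfold incompressibility_conditions.
  rewrite (Derive_const_on a b g c1 u Hg Hu), (Derive_const_on a b D c2 u HD Hu), Hf',
    (HK u Hu), (HD u Hu), (Hg u Hu).
  repeat split; ring.
Qed.

Theorem proposition8 (s e : R -> vec) (f g : R -> R) (a b c d : Rbar) :
  Rbar_lt a b -> Rbar_lt c d ->
  C3_curve_on a b s -> C3_curve_on a b e ->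
  standard_params a b s e ->
  (forall u, inI a b u -> delta s e u <> 0) ->
  (forall u, inI a b u -> ex_derive f u /\ ex_derive g u) ->
  (forall u v, inI a b u -> inI c d v -> qf s e f g u v <> 0) ->
  ~ (forall u, inI a b u -> f u = 0) ->
  ~ (forall u, inI a b u -> g u = 0) ->
  ((forall u v, inI a b u -> inI c d v -> divI_T s e f g u v = 0) <->
   ((forall u, inI a b u -> kappa e u = 0) /\
    exists c2 : R, c2 <> 0 /\ (forall u, inI a b u -> delta s e u = c2) /\
    exists c1 : R, c1 <> 0 /\ (forall u, inI a b u -> g u = c1) /\
    exists (Lam : R -> R) (c3 : R),
      (forall u, inI a b u -> is_derive Lam u (lambda s e u)) /\
      (forall u, inI a b u -> f u = c1 * c2 * Lam u + c3))).
Proof.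
  intros Hab Hcd Hs He _ HD Hfg _ _ Hg0.
  assert (HdD : forall u, inI a b u -> ex_derive (delta s e) u)
    by (intros u; apply ex_derive_delta; assumption).
  assert (Hpointwise : forall u, inI a b u ->
    (forall v, inI c d v -> divI_T s e f g u v = 0) <->
    incompressibility_conditions (delta s e) f g (kappa e) (lambda s e) u).
  { intros u Hu. destruct (Hfg u Hu).
    apply divI_T_eq0_on_iff; auto.
    apply (filter_imp (inI a b)); [exact HD | apply inI_locally, Hu]. }
  split.
  - intros Hdiv. apply const_of_incompressibility_conditions; auto.
    intros u Hu. apply Hpointwise; auto.
  - intros (HK & c2 & _ & HDc & c1 & _ & Hgc & Lam & c3 & HL & Hf) u v Hu.
    revert v. apply Hpointwise; [exact Hu |].
    apply (incompressibility_conditions_of_const a b _ _ _ _ _ Lam c1 c2 c3); assumption.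
Qed.
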